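(* Let $T$ be a split Leibniz triple system with symmetric root system $\Lambda^1$, suppose $\Lambda^0$ is symmetric, and fix $\alpha_0\in\Lambda^1$. Let $\alpha\in\Lambda^1_{\alpha_0}$ and $\beta,\gamma\in\Lambda^1\cup\{0\}$. Then: (1) if $\{T_\alpha,T_\beta,T_\gamma\}\neq0$ then $\beta,\gamma,\alpha+\beta+\gamma\in\Lambda^1_{\alpha_0}\cup\{0\}$; (2) if $\{T_\beta,T_\alpha,T_\gamma\}\neq0$ then $\beta,\gamma,\beta+\alpha+\gamma\in\Lambda^1_{\alpha_0}\cup\{0\}$; (3) if $\{T_\beta,T_\gamma,T_\alpha\}\neq0$ then $\beta,\gamma,\beta+\gamma+\alpha\in\Lambda^1_{\alpha_0}\cup\{0\}$.
   Context: A Leibniz triple system is a vector space $T$ over a field $\mathbb{K}$ with a trilinear product $\{\cdot,\cdot,\cdot\}$ satisfying, for all $a,b,c,d,e\in T$: $\{a,\{b,c,d\},e\}=\{\{a,b,c\},d,e\}-\{\{a,c,b\},d,e\}-\{\{a,d,b\},c,e\}+\{\{a,d,c\},b,e\}$ and $\{a,b,\{c,d,e\}\}=\{\{a,b,c\},d,e\}-\{\{a,b,d\},c,e\}-\{\{a,b,e\},c,d\}+\{\{a,b,e\},d,c\}$. Its standard embedding is the right Leibniz algebra $L=L^0\oplus L^1$ ($L^0$ the span of symbols $x\otimes y$, $L^1=T$) with product $[(x\otimes y,z),(u\otimes v,w)]=(\{x,y,u\}\otimes v-\{x,y,v\}\otimes u+z\otimes w,\ \{x,y,w\}+\{z,u,v\}-\{z,v,u\})$;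 so $[x,y]=x\otimes y$ and $\{x,y,z\}=[[x,y],z]$ for $x,y,z\in T$. Let $H^0$ be a maximal abelian subalgebra of $L^0$; for $\alpha\in(H^0)^*$ put $T_\alpha=\{t\in T:[t,h]=\alpha(h)t\ \forall h\in H^0\}$, $L^0_\alpha=\{v\in L^0:[v,h]=\alpha(h)v\ \forall h\in H^0\}$, $\Lambda^1=\{\alpha\neq0:T_\alpha\neq0\}$, $\Lambda^0=\{\alpha\neq0:L^0_\alpha\neq0\}$. $T$ is split (w.r.t. $H^0$) if $T=T_0\oplus\bigoplus_{\alpha\in\Lambda^1}T_\alpha$, $\{T_0,T_0,T_0\}=0$ and $\{T_\alpha,T_{-\alpha},T_0\}=0$ for all $\alpha\in\Lambda^1$. A set $\Lambda\subset(H^0)^*$ is symmetric if $\alpha\in\Lambda$ implies $-\alpha\in\Lambda$. Two roots $\alpha,\beta\in\Lambda^1$ are connected if there is a family $\alpha_1,\dots,\alpha_{2n+1}\in\Lambda^1\cup\{0\}$ with: $\alpha_1+\dots+\alpha_{2k+1}\in\Lambda^1$ for $k=0,\dots,n$; $\alpha_1+\dots+\alpha_{2k}\in\Lambda^0$ for $k=1,\dots,n$; $\alpha_1=\alpha$ and $\alpha_1+\dots+\alpha_{2n+1}\in\{\beta,-\beta\}$. $\Lambda^1_{\alpha_0}$ denotes the set of $\beta\in\Lambda^1$ connected with $\alpha_0$. *)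

From HB Require Import structures.
From mathcomp Require Import all_boot all_order all_algebra.
Set Implicit Arguments. Unset Strict Implicit. Unset Printing Implicit Defensive.
Import GRing.Theory.
Local Open Scope ring_scope.

Definition trilinear (K : fieldType) (T : lmodType K) (tp : T -> T -> T -> T) :=
  [/\ forall (k : K) x y b c, tp (k *: x + y) b c = k *: tp x b c + tp y b c,
      forall (k : K) a x y c, tp a (k *: x + y) c = k *: tp a x c + tp a y c
    & forall (k : K) a b x y, tp a b (k *: x + y) = k *: tp a b x + tp a b y].

Definition LTS (K : fieldType) (T : lmodType K) (tp : T -> T -> T -> T) :=
  [/\ trilinear tp,
      forall a b c d e, tp a (tp b c d) e =
        tp (tp a b c) d e - tp (tp a c b) d e - tp (tp a d b) c e + tp (tp a d c) b e
    & forall a b c d e, tp a b (tp c d e) =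
        tp (tp a b c) d e - tp (tp a b d) c e - tp (tp a b e) c d + tp (tp a b e) d c].

(* An element of L^0 is written as a formal finite sum  sum_i x_i (x) y_i,
   represented by the list of pairs [:: (x_i, y_i)].  Two formal sums are the
   same element of L^0 iff they act identically on T = L^1 from both sides. *)

Section L0.
Variables (K : fieldType) (T : lmodType K) (tp : T -> T -> T -> T).

Definition L0 := seq (T * T).

(* [v, w] for v in L^0, w in T  :  [x(x)y, w] = {x,y,w} *)
Definition actl (v : L0) (w : T) : T := \sum_(p <- v) tp p.1 p.2 w.
(* [w, v] for w in T, v in L^0  :  [w, x(x)y] = {w,x,y} - {w,y,x} *)
Definition actr (w : T) (v : L0) : T := \sum_(p <- v) (tp w p.1 p.2 - tp w p.2 p.1).

Definition L0eq (v v' : L0) : Prop :=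
  forall z, actl v z = actl v' z /\ actr z v = actr z v'.

(* the product on L^0 : [x(x)y, u(x)v] = {x,y,u}(x)v - {x,y,v}(x)u, extended bilinearly *)
Definition br0 (v v' : L0) : L0 :=
  flatten [seq [:: (tp p.1 p.2 q.1, q.2); (- tp p.1 p.2 q.2, q.1)] | p <- v, q <- v'].

Definition scl (c : K) (v : L0) : L0 := [seq (c *: p.1, p.2) | p <- v].
Definition addL0 (v v' : L0) : L0 := v ++ v'.

Definition subalg (H : L0 -> Prop) :=
  [/\ H [::],
      forall v v', H v -> H v' -> H (addL0 v v'),
      forall c v, H v -> H (scl c v),
      forall v v', H v -> L0eq v v' -> H v'
    & forall v v', H v -> H v' -> H (br0 v v')].

Definition abelian (H : L0 -> Prop) := forall h h', H h -> H h' -> L0eq (br0 h h') [::].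

Definition max_abelian (H : L0 -> Prop) :=
  [/\ subalg H, abelian H &
      forall H', subalg H' -> abelian H' -> (forall v, H v -> H' v) -> forall v, H' v -> H v].

(* elements of (H^0)^* : functions L0 -> K, linear and well defined on H;
   two of them are equal iff they agree on H. *)
Variable H : L0 -> Prop.

Definition dual (al : L0 -> K) :=
  [/\ forall h h', H h -> L0eq h h' -> al h = al h',
      forall h h', H h -> H h' -> al (addL0 h h') = al h + al h'
    & forall c h, H h -> al (scl c h) = c * al h].

Definition feq (al be : L0 -> K) := forall h, H h -> al h = be h.
Definition zero_rt : L0 -> K := fun _ => 0.
Definition add_rt (al be : L0 -> K) : L0 -> K := fun h => al h + be h.
Definition opp_rt (al : L0 -> K) : L0 -> K := fun h => - al h.
Definition nonzero_rt (al : L0 -> K) := exists h, H h /\ al h != 0.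

Definition Tw (al : L0 -> K) (t : T) := forall h, H h -> actr t h = al h *: t.
Definition Lw (al : L0 -> K) (v : L0) := forall h, H h -> L0eq (br0 v h) (scl (al h) v).

Definition Lam1 (al : L0 -> K) :=
  [/\ dual al, nonzero_rt al & exists t, t != 0 /\ Tw al t].
Definition Lam0 (al : L0 -> K) :=
  [/\ dual al, nonzero_rt al & exists v, ~ L0eq v [::] /\ Lw al v].
Definition Lam1z (al : L0 -> K) := Lam1 al \/ feq al zero_rt.

(* partial sums  a_0 + ... + a_(k-1)  (the paper's alpha_1 + ... + alpha_k) *)
Definition psum (a : nat -> L0 -> K) (k : nat) : L0 -> K :=
  fun h => \sum_(i < k) a i h.

(* connectedness of roots; a i is the paper's alpha_(i+1) *)
Definition connected (al be : L0 -> K) :=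
  exists (n : nat) (a : nat -> L0 -> K),
    [/\ forall i, (i <= n.*2)%N -> Lam1z (a i),
        forall k, (k <= n)%N -> Lam1 (psum a (k.*2.+1)),
        forall k, (1 <= k <= n)%N -> Lam0 (psum a (k.*2)),
        feq (a 0%N) al
      & feq (psum a (n.*2.+1)) be \/ feq (psum a (n.*2.+1)) (opp_rt be)].

Definition Lam1_conn (al0 be : L0 -> K) := Lam1 be /\ connected al0 be.

Definition split_wrt :=
  [/\ max_abelian H,
      forall t : T, exists (n : nat) (al : 'I_n -> L0 -> K) (ts : 'I_n -> T),
         t = \sum_(i < n) ts i /\
         forall i, (feq (al i) zero_rt \/ Lam1 (al i)) /\ Tw (al i) (ts i),
      forall a b c, Tw zero_rt a -> Tw zero_rt b -> Tw zero_rt c -> tp a b c = 0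
    & forall al a b c, Lam1 al -> Tw al a -> Tw (opp_rt al) b -> Tw zero_rt c -> tp a b c = 0].

Definition prod_nz (al be ga : L0 -> K) :=
  exists a b c, [/\ Tw al a, Tw be b, Tw ga c & tp a b c != 0].

End L0.

From HB Require Import structures.
From mathcomp Require Import all_boot all_order all_algebra zify.
From Stdlib Require Import Classical.
Set Implicit Arguments. Unset Strict Implicit. Unset Printing Implicit Defensive.
Import GRing.Theory.
Local Open Scope ring_scope.

(** The Leibniz identities say that right multiplication by x (x) y is a
derivation of the triple product, so root spaces multiply additively:
{T_al, T_be, T_ga} lies in T_(al+be+ga) and T_al (x) T_ga in L^0_(al+ga).
Hence a nonzero product {a, b, c} forces al+be+ga into Lambda^1 u {0},
al+be into Lambda^0 u {0}, and one of al+ga, be+ga into Lambda^0 u {0}.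
Whatever the position of the factor from T_al, this suffices to prolong a
chain connecting al0 to al by suitable pairs of roots; the symmetry of
Lambda^1 and Lambda^0 lets chains be negated and roots cancelled. *)

Ltac cancel_summand := lazymatch goal with
  | |- - ?t + _ = _ => first [rewrite addKr | rewrite addNKr | rewrite (addrCA _ t)]
  | |- ?t + _ = _ => first [rewrite addNKr | rewrite addKr | rewrite (addrCA _ (- t))]
  end.

(* Proves an identity between sums in a Z-module by moving it to the form
   [s = 0] and cancelling each summand against its opposite. *)
Ltac zmod_cancel := apply/eqP; rewrite -subr_eq0; apply/eqP;
  rewrite -[LHS]addr0 ?opprD ?opprK -?addrA; repeat cancel_summand; try reflexivity.

Section TripleSystem.
Variables (K : fieldType) (T : lmodType K) (tp : T -> T -> T -> T).
Hypothesis hLTS : LTS tp.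

Let tp_lin1 b c : forall (k : K) x y, tp (k *: x + y) b c = k *: tp x b c + tp y b c.
Proof. by case: hLTS => -[h _ _] _ _ k x y; apply: h. Qed.
Let tp_lin2 a c : forall (k : K) x y, tp a (k *: x + y) c = k *: tp a x c + tp a y c.
Proof. by case: hLTS => -[_ h _] _ _ k x y; apply: h. Qed.
Let tp_lin3 a b : forall (k : K) x y, tp a b (k *: x + y) = k *: tp a b x + tp a b y.
Proof. by case: hLTS => -[_ _ h] _ _ k x y; apply: h. Qed.

Let tp_linear1 b c : {linear T -> T} :=
  HB.pack (fun x => tp x b c) (GRing.isLinear.Build K T T *:%R _ (tp_lin1 b c)).
Let tp_linear2 a c : {linear T -> T} :=
  HB.pack (fun x => tp a x c) (GRing.isLinear.Build K T T *:%R _ (tp_lin2 a c)).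
Let tp_linear3 a b : {linear T -> T} :=
  HB.pack (fun x => tp a b x) (GRing.isLinear.Build K T T *:%R _ (tp_lin3 a b)).

Lemma tp1D b c x y : tp (x + y) b c = tp x b c + tp y b c.
Proof. exact: (linearD (tp_linear1 b c)). Qed.
Lemma tp1N b c x : tp (- x) b c = - tp x b c.
Proof. exact: (linearN (tp_linear1 b c)). Qed.
Lemma tp1Z b c k x : tp (k *: x) b c = k *: tp x b c.
Proof. exact: (linearZZ (tp_linear1 b c)). Qed.
Lemma tp1_sum b c I s (F : I -> T) : tp (\sum_(i <- s) F i) b c = \sum_(i <- s) tp (F i) b c.
Proof. exact: (linear_sum (tp_linear1 b c)). Qed.

Lemma tp2D a c x y : tp a (x + y) c = tp a x c + tp a y c.
Proof. exact: (linearD (tp_linear2 a c)). Qed.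
Lemma tp2N a c x : tp a (- x) c = - tp a x c.
Proof. exact: (linearN (tp_linear2 a c)). Qed.
Lemma tp2Z a c k x : tp a (k *: x) c = k *: tp a x c.
Proof. exact: (linearZZ (tp_linear2 a c)). Qed.
Lemma tp2_sum a c I s (F : I -> T) : tp a (\sum_(i <- s) F i) c = \sum_(i <- s) tp a (F i) c.
Proof. exact: (linear_sum (tp_linear2 a c)). Qed.

Lemma tp3D a b x y : tp a b (x + y) = tp a b x + tp a b y.
Proof. exact: (linearD (tp_linear3 a b)). Qed.
Lemma tp3N a b x : tp a b (- x) = - tp a b x.
Proof. exact: (linearN (tp_linear3 a b)). Qed.
Lemma tp3Z a b k x : tp a b (k *: x) = k *: tp a b x.
Proof. exact: (linearZZ (tp_linear3 a b)). Qed.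
Lemma tp3_sum a b I s (F : I -> T) : tp a b (\sum_(i <- s) F i) = \sum_(i <- s) tp a b (F i).
Proof. exact: (linear_sum (tp_linear3 a b)). Qed.

Let tp_tp2 a b c d e : tp a (tp b c d) e =
  tp (tp a b c) d e - tp (tp a c b) d e - tp (tp a d b) c e + tp (tp a d c) b e.
Proof. by case: hLTS. Qed.
Let tp_tp3 a b c d e : tp a b (tp c d e) =
  tp (tp a b c) d e - tp (tp a b d) c e - tp (tp a b e) c d + tp (tp a b e) d c.
Proof. by case: hLTS. Qed.

(* [t, x (x) y] in the standard embedding. *)
Definition ract_pair t x y := tp t x y - tp t y x.

Lemma ract_pair_tp a b c x y : ract_pair (tp a b c) x y =
  tp (ract_pair a x y) b c + tp a (ract_pair b x y) c + tp a b (ract_pair c x y).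
Proof. by rewrite /ract_pair tp1D tp1N tp2D tp2N tp3D tp3N !tp_tp2 !tp_tp3; zmod_cancel. Qed.

(* The actions of [a (x) c, x (x) y] on z from the left and from the right. *)
Lemma bracket_actl a c x y z : tp (tp a c x) y z - tp (tp a c y) x z =
  tp (ract_pair a x y) c z + tp a (ract_pair c x y) z.
Proof. by rewrite /ract_pair tp1D tp1N tp2D tp2N !tp_tp2; zmod_cancel. Qed.

Lemma bracket_actr a c x y z :
  ract_pair z (tp a c x) y + ract_pair z (- tp a c y) x =
  ract_pair z (ract_pair a x y) c + ract_pair z a (ract_pair c x y).
Proof.
have -> : ract_pair z (ract_pair a x y) c + ract_pair z a (ract_pair c x y) =
  (ract_pair (tp z a c) x y - tp (ract_pair z x y) a c)
  - (ract_pair (tp z c a) x y - tp (ract_pair z x y) c a).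
  by rewrite !ract_pair_tp /ract_pair; zmod_cancel.
by rewrite /ract_pair tp2N tp3N !tp1D !tp1N !tp_tp2 !tp_tp3; zmod_cancel.
Qed.

End TripleSystem.

Section Weights.
Variables (K : fieldType) (T : lmodType K) (tp : T -> T -> T -> T) (H : L0 T -> Prop).
Hypothesis hLTS : LTS tp.

Lemma actrE t h : actr tp t h = \sum_(p <- h) ract_pair tp t p.1 p.2. Proof. by []. Qed.

Lemma Tw_tp al be ga a b c : Tw tp H al a -> Tw tp H be b -> Tw tp H ga c ->
  Tw tp H (add_rt (add_rt al be) ga) (tp a b c).
Proof.
move=> ha hb hc h Hh; rewrite actrE.
under eq_bigr => p _ do rewrite ract_pair_tp //.
rewrite !big_split /= -tp1_sum // -tp2_sum // -tp3_sum // -!actrE ha // hb // hc //.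
by rewrite tp1Z // tp2Z // tp3Z // /add_rt !scalerDl.
Qed.

Lemma Lw_pair al ga a c : Tw tp H al a -> Tw tp H ga c -> Lw tp H (add_rt al ga) [:: (a, c)].
Proof.
move=> ha hc h Hh z; rewrite /br0 /= cats0; split.
- rewrite /actl big_flatten /= big_map.
  under eq_bigr => q _ do rewrite !big_cons big_nil addr0 tp1N // bracket_actl //.
  rewrite big_split /= -tp1_sum // -tp2_sum // -!actrE ha // hc //.
  by rewrite big_cons big_nil addr0 /= tp1Z // tp1Z // tp2Z // /add_rt scalerDl.
- rewrite /actr big_flatten /= big_map.
  under eq_bigr => q _ do rewrite !big_cons big_nil addr0 bracket_actr //.
  rewrite big_split /= /ract_pair !sumrB -tp2_sum // -tp3_sum // -tp2_sum // -tp3_sum //.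
  rewrite -!actrE ha // hc // !big_cons !big_nil !addr0 /= /ract_pair.
  by rewrite !tp2Z // !tp3Z // /add_rt !scalerDl; zmod_cancel.
Qed.

End Weights.

Section Roots.
Variables (K : fieldType) (T : lmodType K) (tp : T -> T -> T -> T) (H : L0 T -> Prop).
Hypothesis hsub : subalg tp H.
Implicit Types x y z : L0 T -> K.
Local Notation zr := (@zero_rt K T).

Lemma feq_sym x y : feq H x y -> feq H y x. Proof. by move=> e h Hh; rewrite e. Qed.
Lemma feq_trans x y z : feq H x y -> feq H y z -> feq H x z.
Proof. by move=> e1 e2 h Hh; rewrite e1 ?e2. Qed.

Lemma feq_add0r x y : feq H x zr -> feq H (add_rt x y) y.
Proof. by move=> e h Hh; rewrite /add_rt e // add0r. Qed.
Lemma feq_addr0 x y : feq H y zr -> feq H (add_rt x y) x.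
Proof. by move=> e h Hh; rewrite /add_rt e // addr0. Qed.

Lemma feq_addC x y : feq H (add_rt x y) (add_rt y x).
Proof. by move=> h _; rewrite /add_rt addrC. Qed.
Lemma feq_add3C x y z : feq H (add_rt (add_rt x y) z) (add_rt (add_rt y x) z).
Proof. by move=> h _; rewrite /add_rt (addrC (x h)). Qed.
Lemma feq_add3_rot x y z : feq H (add_rt (add_rt x y) z) (add_rt (add_rt y z) x).
Proof. by move=> h _; rewrite /add_rt -addrA addrC. Qed.

Lemma dual_feq x y : feq H x y -> dual tp H x -> dual tp H y.
Proof.
case: hsub => _ Hadd Hscl Heq _ e [d1 d2 d3]; split.
- by move=> h h' Hh E; rewrite -!e //; [apply: d1 | apply: Heq E].
- by move=> h h' Hh Hh'; rewrite -!e //; [apply: d2 | apply: Hadd].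
- by move=> c h Hh; rewrite -!e //; [apply: d3 | apply: Hscl].
Qed.

Lemma dual_add x y : dual tp H x -> dual tp H y -> dual tp H (add_rt x y).
Proof.
move=> [d1 d2 d3] [e1 e2 e3]; split; rewrite /add_rt.
- by move=> h h' Hh E; rewrite (d1 h h') // (e1 h h').
- by move=> h h' Hh Hh'; rewrite d2 // e2 // addrACA.
- by move=> c h Hh; rewrite d3 // e3 // mulrDr.
Qed.

Lemma dual_zero : dual tp H zr.
Proof. by split; rewrite /zero_rt // => *; rewrite ?addr0 ?mulr0. Qed.

Lemma nonzero_rt_feq x y : feq H x y -> nonzero_rt H x -> nonzero_rt H y.
Proof. by move=> e [h [Hh nz]]; exists h; rewrite -e. Qed.

Lemma nonzero_rtP x : nonzero_rt H x <-> ~ feq H x zr.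
Proof.
split=> [[h [Hh /eqP nz]] e|nx]; first by apply: nz; rewrite e.
apply: NNPP => nn; apply: nx => h Hh; apply: NNPP => ne; apply: nn.
by exists h; split => //; apply/eqP.
Qed.

Lemma Lam1_feq x y : feq H x y -> Lam1 tp H x -> Lam1 tp H y.
Proof.
move=> e [d n [t [t0 tw]]]; split; [exact: dual_feq e d | exact: nonzero_rt_feq e n |].
by exists t; split => // h Hh; rewrite -e // tw.
Qed.

Lemma Lam0_feq x y : feq H x y -> Lam0 tp H x -> Lam0 tp H y.
Proof.
move=> e [d n [v [v0 lw]]]; split; [exact: dual_feq e d | exact: nonzero_rt_feq e n |].
by exists v; split => // h Hh; rewrite -e //; apply: lw.
Qed.

Lemma Lam1z_feq x y : feq H x y -> Lam1z tp H x -> Lam1z tp H y.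
Proof.
move=> e [l|z]; first by left; apply: Lam1_feq e l.
by right; apply: feq_trans (feq_sym e) z.
Qed.

Lemma Lam1_neq0 x : Lam1 tp H x -> ~ feq H x zr.
Proof. by case=> _ /nonzero_rtP. Qed.

Lemma Lam1z_dual x : Lam1z tp H x -> dual tp H x.
Proof. by case=> [[]|z] //; apply: dual_feq (feq_sym z) dual_zero. Qed.

Lemma connected_feq al0 x y : feq H x y -> connected tp H al0 x -> connected tp H al0 y.
Proof.
move=> e [n [a [c1 c2 c3 c4 c5]]]; exists n, a; split => //.
case: c5 => f; [left | right]; first exact: feq_trans f e.
by apply: feq_trans f _ => h Hh; rewrite /opp_rt e.
Qed.

Lemma connected_opp al0 x : connected tp H al0 x -> connected tp H al0 (opp_rt x).
Proof.
move=> [n [a [c1 c2 c3 c4 c5]]]; exists n, a; split => //.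
by case: c5 => f; [right | left] => h Hh; rewrite f // /opp_rt ?opprK.
Qed.

Lemma psumS (a : nat -> L0 T -> K) k h : psum a k.+1 h = psum a k h + a k h.
Proof. by rewrite /psum big_ord_recr. Qed.

Lemma connected_extend al0 x y z n (a : nat -> L0 T -> K) :
  (forall i, (i <= n.*2)%N -> Lam1z tp H (a i)) ->
  (forall k, (k <= n)%N -> Lam1 tp H (psum a (k.*2.+1))) ->
  (forall k, (1 <= k <= n)%N -> Lam0 tp H (psum a (k.*2))) ->
  feq H (a 0%N) al0 -> feq H (psum a (n.*2.+1)) x ->
  Lam1z tp H y -> Lam1z tp H z -> Lam0 tp H (add_rt x y) ->
  Lam1 tp H (add_rt (add_rt x y) z) -> connected tp H al0 (add_rt (add_rt x y) z).
Proof.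
move=> c1 c2 c3 c4 c5 hy hz h0 h1.
pose a' i := if i == n.*2.+1 then y else if i == n.*2.+2 then z else a i.
have low k : (k <= n.*2.+1)%N -> feq H (psum a' k) (psum a k).
  move=> kn h _; apply: eq_bigr => i _; rewrite /a' !ifN //.
    by rewrite neq_ltn ltnS ltnW // (leq_trans (ltn_ord i)).
  by rewrite neq_ltn (leq_trans (ltn_ord i)).
have e2 : feq H (psum a' (n.*2.+2)) (add_rt x y).
  by move=> h Hh; rewrite psumS low // c5 // /a' eqxx.
have e3 : feq H (psum a' (n.*2.+3)) (add_rt (add_rt x y) z).
  by move=> h Hh; rewrite psumS e2 // /a' ifN ?eqxx // neq_ltn ltnSn orbT.
exists n.+1, a'; rewrite doubleS; split.
- move=> i hi; rewrite /a'; case: ifP => [_|ne1]; first exact: hy.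
  case: ifP => [_|ne2]; first exact: hz.
  apply: c1; move/negbT: ne1; move/negbT: ne2; move: hi; clear; lia.
- move=> k kn; case: (ltnP n k) => [nk|kn'].
    have -> : k = n.+1 by lia.
    by rewrite doubleS; apply: Lam1_feq (feq_sym e3) h1.
  apply: Lam1_feq (feq_sym (low _ _)) (c2 _ kn'); lia.
- move=> k /andP [k1 kn]; case: (ltnP n k) => [nk|kn'].
    have -> : k = n.+1 by lia.
    by rewrite doubleS; apply: Lam0_feq (feq_sym e2) h0.
  apply: Lam0_feq (feq_sym (low _ _)) (c3 _ _); [lia | by rewrite k1 kn'].
- by rewrite /a'.
- by left.
Qed.

Section Connected.
Hypothesis hsym1 : forall al, Lam1 tp H al -> Lam1 tp H (opp_rt al).
Hypothesis hsym0 : forall al, Lam0 tp H al -> Lam0 tp H (opp_rt al).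
Variable al0 : L0 T -> K.
Local Notation conn x := (connected tp H al0 x).

Definition Lam0z x := Lam0 tp H x \/ feq H x zr.

Lemma Lam0z_feq x y : feq H x y -> Lam0z x -> Lam0z y.
Proof.
move=> e [l|z]; first by left; apply: Lam0_feq e l.
by right; apply: feq_trans (feq_sym e) z.
Qed.

Lemma Lam0z_addC x y : Lam0z (add_rt x y) -> Lam0z (add_rt y x).
Proof. exact/Lam0z_feq/feq_addC. Qed.

Lemma Lam0_of_Lam0z x : ~ feq H x zr -> Lam0z x -> Lam0 tp H x.
Proof. by move=> nx [|]. Qed.

Lemma Lam1z_opp x : Lam1z tp H x -> Lam1z tp H (opp_rt x).
Proof.
case=> [l|z]; first by left; apply: hsym1.
by right => h Hh; rewrite /opp_rt z // /zero_rt oppr0.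
Qed.

(* Negating the whole chain handles the case where it ends at [- x]. *)
Lemma connected_step x y z : conn x -> Lam1z tp H y -> Lam1z tp H z ->
  Lam0 tp H (add_rt x y) -> Lam1 tp H (add_rt (add_rt x y) z) -> conn (add_rt (add_rt x y) z).
Proof.
move=> [n [a [c1 c2 c3 c4 [c5|c5]]]] hy hz h0 h1.
  exact: connected_extend c1 c2 c3 c4 c5 hy hz h0 h1.
have ex1 : feq H (opp_rt (add_rt x y)) (add_rt (opp_rt x) (opp_rt y)).
  by move=> h _; rewrite /opp_rt /add_rt opprD.
have ex2 : feq H (opp_rt (add_rt (add_rt x y) z))
                 (add_rt (add_rt (opp_rt x) (opp_rt y)) (opp_rt z)).
  by move=> h _; rewrite /opp_rt /add_rt !opprD.
have := connected_extend c1 c2 c3 c4 c5 (Lam1z_opp hy) (Lam1z_opp hz)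
  (Lam0_feq ex1 (hsym0 h0)) (Lam1_feq ex2 (hsym1 h1)).
move/(connected_feq (feq_sym ex2))/connected_opp.
by apply: connected_feq => h _; rewrite /opp_rt opprK.
Qed.

Lemma connected_add_eq0 x y : conn x -> feq H (add_rt x y) zr -> conn y.
Proof.
move=> cx e; apply: connected_feq (connected_opp cx) => h Hh.
by apply/esym/eqP; rewrite /opp_rt -addr_eq0 addrC; apply/eqP/e.
Qed.

(* Prolong the chain of [x] by [y] and [- x]. *)
Lemma connected_back x y : Lam1 tp H x -> conn x -> Lam1 tp H y ->
  Lam0z (add_rt x y) -> conn y.
Proof.
move=> lx cx ly [l0|z]; last exact: connected_add_eq0 cx z.
have e : feq H (add_rt (add_rt x y) (opp_rt x)) y.
  by move=> h _; rewrite /add_rt /opp_rt addrAC subrr add0r.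
apply: (connected_feq e); apply: connected_step => //; first by left.
  by left; apply: hsym1.
exact: Lam1_feq (feq_sym e) ly.
Qed.

(* Prolong the chain of [x] by [0], [y], then by [- x], [0]. *)
Lemma connected_through0 x y : Lam1 tp H x -> conn x -> Lam0 tp H x -> Lam0 tp H y ->
  Lam1z tp H (add_rt x y) -> Lam1 tp H y -> conn y.
Proof.
move=> lx cx l0x l0y [l1|z] ly; last exact: connected_add_eq0 cx z.
have e1 : feq H (add_rt (add_rt x zr) y) (add_rt x y).
  by move=> h _; rewrite /add_rt /zero_rt addr0.
have cxy : conn (add_rt x y).
  apply: (connected_feq e1); apply: connected_step => //; try by [right | left].
    by apply: Lam0_feq _ l0x => h _; rewrite /add_rt /zero_rt addr0.
  exact: Lam1_feq (feq_sym e1) l1.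
have e2 : feq H (add_rt (add_rt (add_rt x y) (opp_rt x)) zr) y.
  by move=> h _; rewrite /add_rt /opp_rt /zero_rt addr0 addrAC subrr add0r.
apply: (connected_feq e2); apply: connected_step => //; try by [right | left].
- by left; apply: hsym1.
- by apply: Lam0_feq _ l0y => h _; rewrite /add_rt /opp_rt addrAC subrr add0r.
- exact: Lam1_feq (feq_sym e2) ly.
Qed.

Definition Lam1_connz x := Lam1_conn tp H al0 x \/ feq H x zr.

Lemma Lam1_connz_feq x y : feq H x y -> Lam1_connz x -> Lam1_connz y.
Proof.
move=> e [[l c]|z]; last by right; apply: feq_trans (feq_sym e) z.
by left; split; [apply: Lam1_feq e l | apply: connected_feq e c].
Qed.

Lemma Lam1_connz_of x : Lam1z tp H x -> (Lam1 tp H x -> conn x) -> Lam1_connz x.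
Proof. by case=> [l|z] C; [left; split => //; apply: C | right]. Qed.

Lemma Lam1_connz_closure al be ga : Lam1 tp H al -> conn al ->
  Lam1z tp H be -> Lam1z tp H ga ->
  Lam0z (add_rt al be) -> Lam1z tp H (add_rt (add_rt al be) ga) ->
  Lam0z (add_rt al ga) \/ Lam0z (add_rt be ga) ->
  [/\ Lam1_connz be, Lam1_connz ga & Lam1_connz (add_rt (add_rt al be) ga)].
Proof.
move=> lal cal hbe hga wab wabc wg.
have Cbe : Lam1 tp H be -> conn be := fun l => connected_back lal cal l wab.
have Cga : Lam1 tp H ga -> conn ga.
  move=> lga; case: wg => [wag|wbg]; first exact: connected_back lal cal lga wag.
  case: hbe => [lbe|zbe]; first exact: connected_back lbe (Cbe lbe) lga wbg.
  apply: (connected_through0 lal cal _ _ _ lga).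
  - exact: Lam0_of_Lam0z (Lam1_neq0 lal) (Lam0z_feq (feq_addr0 al zbe) wab).
  - exact: Lam0_of_Lam0z (Lam1_neq0 lga) (Lam0z_feq (feq_add0r ga zbe) wbg).
  - apply: Lam1z_feq _ wabc.
    by move=> h Hh; rewrite /add_rt zbe // /zero_rt addr0.
split; [exact: Lam1_connz_of hbe Cbe | exact: Lam1_connz_of hga Cga |].
apply: (Lam1_connz_of wabc) => l.
case: wab => [l0|z0]; first by apply: connected_step => //; left.
have e := feq_add0r ga z0.
exact: connected_feq (feq_sym e) (Cga (Lam1_feq e l)).
Qed.

End Connected.

Section Products.
Hypothesis hLTS : LTS tp.

Lemma pair_neq0_actl a c u : tp a c u != 0 -> ~ L0eq tp [:: (a, c)] [::].
Proof.
move=> nz E; have [e _] := E u; move: e; rewrite /actl big_cons !big_nil addr0 /= => e.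
by rewrite e eqxx in nz.
Qed.

Lemma pair_neq0_actr w a c : ract_pair tp w a c != 0 -> ~ L0eq tp [:: (a, c)] [::].
Proof.
move=> nz E; have [_ e] := E w; move: e; rewrite /actr big_cons !big_nil addr0 /= => e.
by rewrite /ract_pair e eqxx in nz.
Qed.

Lemma Lam1z_tp x y z a b c : dual tp H x -> dual tp H y -> dual tp H z ->
  Tw tp H x a -> Tw tp H y b -> Tw tp H z c ->
  tp a b c != 0 -> Lam1z tp H (add_rt (add_rt x y) z).
Proof.
move=> dx dy dz ta tb tc nz.
have [e|ne] := classic (feq H (add_rt (add_rt x y) z) zr); first by right.
left; split; [by apply: dual_add => //; apply: dual_add | exact/nonzero_rtP |].
by exists (tp a b c); split => //; apply: Tw_tp.
Qed.

Lemma Lam0z_pair x z a c : dual tp H x -> dual tp H z -> Tw tp H x a -> Tw tp H z c ->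
  ~ L0eq tp [:: (a, c)] [::] -> Lam0z (add_rt x z).
Proof.
move=> dx dz ta tc nz.
have [e|ne] := classic (feq H (add_rt x z) zr); first by right.
left; split; [exact: dual_add | exact/nonzero_rtP |].
by exists [:: (a, c)]; split => //; apply: Lw_pair.
Qed.

(* Since [{a,b,c} = {a,c,b} + [a, b (x) c]], a nonzero product makes
   [a (x) c] or [b (x) c] nonzero in [L^0]. *)
Lemma roots_of_tp_neq0 x y z a b c : Lam1z tp H x -> Lam1z tp H y -> Lam1z tp H z ->
  Tw tp H x a -> Tw tp H y b -> Tw tp H z c -> tp a b c != 0 ->
  [/\ Lam0z (add_rt x y), Lam1z tp H (add_rt (add_rt x y) z)
    & Lam0z (add_rt x z) \/ Lam0z (add_rt y z)].
Proof.
move=> /Lam1z_dual dx /Lam1z_dual dy /Lam1z_dual dz ta tb tc nz.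
split; [exact: Lam0z_pair dx dy ta tb (pair_neq0_actl nz) | exact: Lam1z_tp ta tb tc nz |].
have [e|nz'] := eqVneq (tp a c b) 0.
  right; apply: Lam0z_pair dy dz tb tc (pair_neq0_actr (w := a) _).
  by rewrite /ract_pair e subr0.
by left; apply: Lam0z_pair dx dz ta tc (pair_neq0_actl nz').
Qed.

End Products.

End Roots.

Theorem lemma3p3 (K : fieldType) (T : lmodType K) (tp : T -> T -> T -> T)
  (H : L0 T -> Prop)
  (hLTS : LTS tp)
  (hsplit : split_wrt tp H)
  (hsym1 : forall al, Lam1 tp H al -> Lam1 tp H (opp_rt al))
  (hsym0 : forall al, Lam0 tp H al -> Lam0 tp H (opp_rt al))
  (al0 al be ga : L0 T -> K)
  (hal0 : Lam1 tp H al0)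
  (hal : Lam1_conn tp H al0 al)
  (hbe : Lam1z tp H be) (hga : Lam1z tp H ga) :
  let inz x := Lam1_conn tp H al0 x \/ feq H x (@zero_rt K T) in
  [/\ prod_nz tp H al be ga -> [/\ inz be, inz ga & inz (add_rt (add_rt al be) ga)],
      prod_nz tp H be al ga -> [/\ inz be, inz ga & inz (add_rt (add_rt be al) ga)]
    & prod_nz tp H be ga al -> [/\ inz be, inz ga & inz (add_rt (add_rt be ga) al)]].
Proof.
move=> inz; have hsub : subalg tp H by case: hsplit => [[]].
have [lal cal] := hal; have hal' : Lam1z tp H al by left.
have roots := Lam1_connz_closure hsub hsym1 hsym0 lal cal.
have roots_feq := Lam1_connz_feq hsub.
split=> [[a [b [c [ta tb tc nz]]]]|[b [a [c [tb ta tc nz]]]]|[b [c [a [tb tc ta nz]]]]].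
- have [wab wabc wg] := roots_of_tp_neq0 hsub hLTS hal' hbe hga ta tb tc nz.
  exact: roots hbe hga wab wabc wg.
- have [wba wbag /or_comm wg] := roots_of_tp_neq0 hsub hLTS hbe hal' hga tb ta tc nz.
  have [] := roots _ _ hbe hga (Lam0z_addC hsub wba)
    (Lam1z_feq hsub (feq_add3C _ _ _) wbag) wg.
  by split=> //; apply: roots_feq (feq_add3C _ _ _) _.
- have [wbg wbga [wba|wga]] := roots_of_tp_neq0 hsub hLTS hbe hga hal' tb tc ta nz.
    have [] := roots _ _ hbe hga (Lam0z_addC hsub wba)
      (Lam1z_feq hsub (feq_sym (feq_add3_rot _ _ _)) wbga) (or_intror wbg).
    by split=> //; apply: roots_feq (feq_add3_rot _ _ _) _.
  have e : feq H (add_rt (add_rt al ga) be) (add_rt (add_rt be ga) al).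
    exact: feq_trans (feq_add3_rot _ _ _) (feq_add3C _ _ _).
  have [] := roots _ _ hga hbe (Lam0z_addC hsub wga) (Lam1z_feq hsub (feq_sym e) wbga)
    (or_intror (Lam0z_addC hsub wbg)).
  by split=> //; apply: roots_feq e _.
Qed.
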